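(* Let $f:X\to Y$ be a local homeomorphism between metric spaces. Then for every non-isolated point $x\in X$, $D_x^-f=\operatorname{sur}(f,x)$.
   Context: For a continuous map $f:X\to Y$ between metric spaces and a non-isolated point $x\in X$, the lower scalar derivative is $D_x^-f=\liminf_{z\to x,\,z\neq x}\frac{d(f(z),f(x))}{d(z,x)}\in[0,\infty]$. For $x\in X$ and $t>0$, $\operatorname{Sur}(f,x)(t)=\sup\{r\ge 0: B_r(f(x))\subset f(B_t(x))\}$, where $B_r(\cdot)$ denotes the open ball, and the surjection constant is $\operatorname{sur}(f,x)=\liminf_{t\to 0^+} t^{-1}\operatorname{Sur}(f,x)(t)$. *)

From Stdlib Require Import Reals.
From Coquelicot Require Import Coquelicot.
Open Scope R_scope.

Record MetricSpace := {
  mcarrier :> Type;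
  mdist : mcarrier -> mcarrier -> R;
  mdist_ge0 : forall x y, 0 <= mdist x y;
  mdist_eq0 : forall x y, mdist x y = 0 <-> x = y;
  mdist_sym : forall x y, mdist x y = mdist y x;
  mdist_tri : forall x y z, mdist x z <= mdist x y + mdist y z
}.

Arguments mdist {m} _ _.

Definition ball_m {X : MetricSpace} (x : X) (r : R) : X -> Prop :=
  fun z => mdist z x < r.

Definition open_m {X : MetricSpace} (U : X -> Prop) : Prop :=
  forall u, U u -> exists e, 0 < e /\ forall z, ball_m u e z -> U z.

Definition image_m {X Y : MetricSpace} (f : X -> Y) (A : X -> Prop) : Y -> Prop :=
  fun y => exists x, A x /\ f x = y.

Definition continuous_within_at {X Y : MetricSpace} (A : X -> Prop) (f : X -> Y) (x : X) :=
  forall e, 0 < e -> exists d, 0 < d /\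
    forall z, A z -> mdist z x < d -> mdist (f z) (f x) < e.

Definition continuous_m {X Y : MetricSpace} (f : X -> Y) :=
  forall x, continuous_within_at (fun _ => True) f x.

Definition local_homeomorphism {X Y : MetricSpace} (f : X -> Y) : Prop :=
  forall x, exists U : X -> Prop,
    U x /\ open_m U /\ open_m (image_m f U) /\
    exists g : Y -> X,
      (forall u, U u -> g (f u) = u) /\
      (forall y, image_m f U y -> U (g y) /\ f (g y) = y) /\
      (forall u, U u -> continuous_within_at U f u) /\
      (forall y, image_m f U y -> continuous_within_at (image_m f U) g y).

Definition non_isolated {X : MetricSpace} (x : X) : Prop :=
  forall e, 0 < e -> exists z, z <> x /\ mdist z x < e.

Definition liminf_punct {X : MetricSpace} (x : X) (h : X -> Rbar) : Rbar :=
  Rbar_lub (fun v => exists r, 0 < r /\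
     v = Rbar_glb (fun w => exists z, z <> x /\ mdist z x < r /\ w = h z)).

Definition lower_scalar_derivative {X Y : MetricSpace} (f : X -> Y) (x : X) : Rbar :=
  liminf_punct x (fun z => Finite (mdist (f z) (f x) / mdist z x)).

Definition Sur {X Y : MetricSpace} (f : X -> Y) (x : X) (t : R) : Rbar :=
  Rbar_lub (fun v => exists r, 0 <= r /\ v = Finite r /\
     forall y, ball_m (f x) r y -> image_m f (ball_m x t) y).

(* sur(f,x) = liminf_{t -> 0+} t^{-1} Sur(f,x)(t), as sup_{s>0} inf_{0<t<s} *)
Definition sur {X Y : MetricSpace} (f : X -> Y) (x : X) : Rbar :=
  Rbar_lub (fun v => exists s, 0 < s /\
     v = Rbar_glb (fun w => exists t, 0 < t /\ t < s /\
                      w = Rbar_mult (Sur f x t) (Finite (/ t)))).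

(* If f maps small balls around x onto neighbourhoods of f x and d(f z, f x) >= c d(z, x)
   near x, then every point of B_{ct}(f x) has a preimage near x, which cannot lie outside
   B_t(x); hence Sur(f,x)(t) >= ct and D_x^- f <= sur(f,x).  Conversely, if f is injective
   on a ball B around x, the only preimage of f z in B is z itself, so for t = d(z, x) the
   point f z lies outside f(B_t(x)); hence Sur(f,x)(t) <= d(f z, f x) and
   sur(f,x) <= D_x^- f.  A local homeomorphism has both properties at every point. *)

From Stdlib Require Import Reals Lra.
From Coquelicot Require Import Coquelicot.
Open Scope R_scope.

Lemma Rbar_lub_ub (E : Rbar -> Prop) (x : Rbar) : E x -> Rbar_le x (Rbar_lub E).
Proof. unfold Rbar_lub; destruct (Rbar_ex_lub E) as [l [Hub Hleast]]; simpl; auto. Qed.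

Lemma Rbar_lub_le (E : Rbar -> Prop) (b : Rbar) :
  (forall x, E x -> Rbar_le x b) -> Rbar_le (Rbar_lub E) b.
Proof. unfold Rbar_lub; destruct (Rbar_ex_lub E) as [l [Hub Hleast]]; simpl; auto. Qed.

Lemma Rbar_glb_lb (E : Rbar -> Prop) (x : Rbar) : E x -> Rbar_le (Rbar_glb E) x.
Proof. unfold Rbar_glb; destruct (Rbar_ex_glb E) as [l [Hlb Hgreatest]]; simpl; auto. Qed.

Lemma Rbar_le_glb (E : Rbar -> Prop) (b : Rbar) :
  (forall x, E x -> Rbar_le b x) -> Rbar_le b (Rbar_glb E).
Proof. unfold Rbar_glb; destruct (Rbar_ex_glb E) as [l [Hlb Hgreatest]]; simpl; auto. Qed.

Lemma Rbar_le_approx (a b : Rbar) :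
  (forall c : R, Rbar_lt c a -> Rbar_le c b) -> Rbar_le a b.
Proof.
  intros H. destruct (Rbar_le_lt_dec a b) as [Hab | Hba]; auto.
  exfalso. destruct a as [a | |], b as [b | |]; simpl in Hba; try contradiction.
  - specialize (H ((a + b) / 2)). simpl in H. lra.
  - specialize (H (a - 1)). simpl in H. apply H. lra.
  - specialize (H (b + 1)). simpl in H. lra.
  - exact (H 0 I).
Qed.

Lemma Rbar_mult_infty_inv_pos (t : R) : 0 < t ->
  Rbar_mult p_infty (/ t) = p_infty /\ Rbar_mult m_infty (/ t) = m_infty.
Proof.
  intros Ht. assert (Hinv : Rbar_lt 0 (/ t)) by (simpl; apply Rinv_0_lt_compat, Ht).
  split; apply is_Rbar_mult_unique.
  - exact (is_Rbar_mult_p_infty_pos _ Hinv).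
  - exact (is_Rbar_mult_m_infty_pos _ Hinv).
Qed.

Lemma Rbar_le_mult_inv_pos (a t : R) (x : Rbar) :
  0 < t -> Rbar_le (a * t) x -> Rbar_le a (Rbar_mult x (/ t)).
Proof.
  intros Ht Hx. destruct (Rbar_mult_infty_inv_pos t Ht) as [Hp _].
  destruct x as [x | |]; simpl in Hx; try contradiction.
  - simpl. apply (Rmult_le_reg_r t); [exact Ht|].
    rewrite Rmult_assoc, Rinv_l, Rmult_1_r by lra. exact Hx.
  - rewrite Hp. exact I.
Qed.

Lemma Rbar_mult_inv_pos_le (a t : R) (x : Rbar) :
  0 < t -> Rbar_le x a -> Rbar_le (Rbar_mult x (/ t)) (a / t).
Proof.
  intros Ht Hx. destruct (Rbar_mult_infty_inv_pos t Ht) as [_ Hm].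
  destruct x as [x | |]; simpl in Hx; try contradiction.
  - simpl. apply Rmult_le_compat_r; [left; apply Rinv_0_lt_compat|]; assumption.
  - rewrite Hm. exact I.
Qed.

Lemma Rbar_lub_pos_le (F G : R -> Rbar) (e : R) : 0 < e ->
  (forall r r', 0 < r' <= r -> Rbar_le (F r) (F r')) ->
  (forall r, 0 < r <= e -> Rbar_le (F r) (G r)) ->
  Rbar_le (Rbar_lub (fun v => exists r, 0 < r /\ v = F r))
          (Rbar_lub (fun v => exists r, 0 < r /\ v = G r)).
Proof.
  intros He HF HFG. apply Rbar_lub_le. intros v [r [Hr ->]].
  assert (Hr' : 0 < Rmin r e) by (apply Rmin_pos; lra).
  apply Rbar_le_trans with (F (Rmin r e)).
  { apply HF. split; [exact Hr'|apply Rmin_l]. }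
  apply Rbar_le_trans with (G (Rmin r e)).
  { apply HFG. split; [exact Hr'|apply Rmin_r]. }
  apply Rbar_lub_ub. exists (Rmin r e). split; auto.
Qed.

Lemma mdist_pos {X : MetricSpace} (z x : X) : z <> x -> 0 < mdist z x.
Proof.
  intros Hzx. destruct (mdist_ge0 _ z x) as [Hpos | Hzero]; auto.
  exfalso. apply Hzx, mdist_eq0. auto.
Qed.

Section LowerDerivativeSurjection.

Variables (X Y : MetricSpace) (f : X -> Y) (x : X).

Definition open_map_at : Prop :=
  forall r, 0 < r -> exists d, 0 < d /\
    forall y, ball_m (f x) d y -> image_m f (ball_m x r) y.

Definition injective_near : Prop :=
  exists e, 0 < e /\
    forall z w, ball_m x e z -> ball_m x e w -> f z = f w -> z = w.

Lemma local_homeomorphism_open_map_at : local_homeomorphism f -> open_map_at.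
Proof.
  intros Hlh r Hr.
  destruct (Hlh x) as [U [Ux [_ [HfU_open [g [Hgf [Hfg [_ Hg_cont]]]]]]]].
  assert (Hfx : image_m f U (f x)) by (exists x; auto).
  destruct (Hg_cont (f x) Hfx r Hr) as [d1 [Hd1 Hg_near]].
  destruct (HfU_open (f x) Hfx) as [d2 [Hd2 Hball_fU]].
  exists (Rmin d1 d2). split; [apply Rmin_pos; assumption|].
  intros y Hy. unfold ball_m in Hy.
  assert (HyU : image_m f U y) by (apply Hball_fU; unfold ball_m;
    pose proof (Rmin_r d1 d2); lra).
  destruct (Hfg y HyU) as [_ Hfgy].
  exists (g y). split; [|exact Hfgy].
  unfold ball_m. rewrite <- (Hgf x Ux). apply Hg_near; [exact HyU|].
  pose proof (Rmin_l d1 d2). lra.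
Qed.

Lemma local_homeomorphism_injective_near : local_homeomorphism f -> injective_near.
Proof.
  intros Hlh.
  destruct (Hlh x) as [U [Ux [HU_open [_ [g [Hgf _]]]]]].
  destruct (HU_open x Ux) as [e [He Hball_U]].
  exists e. split; [exact He|].
  intros z w Hz Hw Hfzw.
  rewrite <- (Hgf z (Hball_U z Hz)), <- (Hgf w (Hball_U w Hw)), Hfzw. reflexivity.
Qed.

Lemma Sur_ge_mul (c d r t : R) : 0 <= c -> 0 <= t -> c * t <= d ->
  (forall y, ball_m (f x) d y -> image_m f (ball_m x r) y) ->
  (forall z, mdist z x < r -> c * mdist z x <= mdist (f z) (f x)) ->
  Rbar_le (c * t) (Sur f x t).
Proof.
  intros Hc Ht Hctd Hopen Hexpand. apply Rbar_lub_ub.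
  exists (c * t). split; [apply Rmult_le_pos; assumption|split; [reflexivity|]].
  intros y Hy. unfold ball_m in Hy.
  destruct (Hopen y ltac:(unfold ball_m; lra)) as [w [Hw <-]].
  exists w. split; [|reflexivity]. unfold ball_m in *.
  destruct (Rlt_le_dec (mdist w x) t) as [Hwt | Htw]; [exact Hwt|].
  pose proof (Hexpand w Hw).
  pose proof (Rmult_le_compat_l c _ _ Hc Htw). lra.
Qed.

Lemma Sur_le_dist (e : R) (z : X) :
  (forall z w, ball_m x e z -> ball_m x e w -> f z = f w -> z = w) ->
  mdist z x < e -> Rbar_le (Sur f x (mdist z x)) (mdist (f z) (f x)).
Proof.
  intros Hinj Hz. apply Rbar_lub_le. intros v [r [_ [-> Hsub]]]. simpl.
  destruct (Rle_lt_dec r (mdist (f z) (f x))) as [Hr | Hr]; [exact Hr|].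
  destruct (Hsub (f z) Hr) as [w [Hw Hfw]]. unfold ball_m in Hw.
  assert (w = z) as -> by (apply Hinj; [unfold ball_m; lra | exact Hz | exact Hfw]).
  lra.
Qed.

Lemma sur_ge (c s : R) : 0 < s ->
  (forall t, 0 < t -> t < s -> Rbar_le (c * t) (Sur f x t)) ->
  Rbar_le c (sur f x).
Proof.
  intros Hs HSur. apply Rbar_le_trans with
    (Rbar_glb (fun w => exists t, 0 < t /\ t < s /\ w = Rbar_mult (Sur f x t) (/ t))).
  - apply Rbar_le_glb. intros w [t [Ht [Hts ->]]].
    apply Rbar_le_mult_inv_pos; auto.
  - apply Rbar_lub_ub. exists s. split; auto.
Qed.

Theorem lower_scalar_derivative_le_sur :
  open_map_at -> Rbar_le (lower_scalar_derivative f x) (sur f x).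
Proof.
  intros Hopen. apply Rbar_lub_le. intros v [r [Hr ->]].
  apply Rbar_le_approx. intros c Hc.
  set (c' := Rmax c 0).
  assert (Hc'0 : 0 <= c') by apply Rmax_r.
  assert (Hexpand : forall z, mdist z x < r -> c' * mdist z x <= mdist (f z) (f x)).
  { intros z Hz. unfold c'. destruct (Rle_lt_dec c 0) as [Hc_neg | Hc_pos].
    { rewrite Rmax_right, Rmult_0_l by exact Hc_neg. apply mdist_ge0. }
    rewrite Rmax_left by lra.
    destruct (mdist_ge0 _ z x) as [Hzx_pos | Hzx_zero].
    2: { rewrite <- Hzx_zero, Rmult_0_r. apply mdist_ge0. }
    assert (Hratio : c < mdist (f z) (f x) / mdist z x).
    { apply (Rbar_lt_le_trans c _ (mdist (f z) (f x) / mdist z x) Hc).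
      apply Rbar_glb_lb. exists z. repeat split; auto.
      intros ->. rewrite (proj2 (mdist_eq0 _ x x) eq_refl) in Hzx_pos. lra. }
    apply Rmult_lt_compat_r with (r := mdist z x) in Hratio; [|exact Hzx_pos].
    unfold Rdiv in Hratio. rewrite Rmult_assoc, Rinv_l, Rmult_1_r in Hratio by lra. lra. }
  destruct (Hopen r Hr) as [d [Hd Hball]].
  apply Rbar_le_trans with c'; [simpl; apply Rmax_l|].
  apply (sur_ge c' (d / (c' + 1))); [apply Rdiv_lt_0_compat; lra|].
  intros t Ht Hts. apply (Sur_ge_mul c' d r t); auto; [lra|].
  apply Rmult_lt_compat_r with (r := c' + 1) in Hts; [|lra].
  unfold Rdiv in Hts. rewrite Rmult_assoc, Rinv_l, Rmult_1_r in Hts by lra. nra.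
Qed.

Theorem sur_le_lower_scalar_derivative :
  injective_near -> Rbar_le (sur f x) (lower_scalar_derivative f x).
Proof.
  intros [e [He Hinj]]. apply (Rbar_lub_pos_le _ _ e He).
  - intros s s' Hs'. apply Rbar_glb_subset.
    intros w [t [Ht [Hts ->]]]. exists t. repeat split; auto. lra.
  - intros s [Hs Hse]. apply Rbar_le_glb. intros w [z [Hzx [Hzs ->]]].
    pose proof (mdist_pos z x Hzx) as Hzx_pos.
    apply Rbar_le_trans with (Rbar_mult (Sur f x (mdist z x)) (/ mdist z x)).
    + apply Rbar_glb_lb. exists (mdist z x). auto.
    + apply Rbar_mult_inv_pos_le; [exact Hzx_pos|].
      apply (Sur_le_dist e); [exact Hinj|lra].
Qed.

End LowerDerivativeSurjection.

Theorem mainTheorem6 (X Y : MetricSpace) (f : X -> Y) :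
  local_homeomorphism f ->
  forall x : X, non_isolated x ->
    lower_scalar_derivative f x = sur f x.
Proof.
  intros Hlh x _. apply Rbar_le_antisym.
  - apply lower_scalar_derivative_le_sur, local_homeomorphism_open_map_at, Hlh.
  - apply sur_le_lower_scalar_derivative, local_homeomorphism_injective_near, Hlh.
Qed.
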